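(* Let $k>0$ and $\ell\ge0$ be integers, $q=2^k$ and $Q=2^{\ell}$. Then the polynomial $(X^{q^2}+X^q+X)\circ X^{Q+1}=X^{q^2(Q+1)}+X^{q(Q+1)}+X^{Q+1}$ is injective on $u+\mathbb{F}_q$ for every $u\in\mathbb{F}_{q^3}$ if and only if $\gcd(q-1,Q+1)=1$, or equivalently, if and only if $\operatorname{ord}_2(k)\le\operatorname{ord}_2(\ell)$.
   Context: For a nonzero integer $N$, $\operatorname{ord}_2(N)$ is the largest integer $s\ge0$ with $2^s\mid N$, and $\operatorname{ord}_2(0)=\infty$. *)

From HB Require Import structures.
From mathcomp Require Import all_boot all_order all_algebra all_field.
Set Implicit Arguments. Unset Strict Implicit. Unset Printing Implicit Defensive.
Import GRing.Theory.
Local Open Scope ring_scope.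

Definition f3 (R : nzRingType) (q Q : nat) : {poly R} :=
  ('X^(q ^ 2) + 'X^q + 'X) \Po 'X^(Q.+1).

Definition subFq (F : finFieldType) (q : nat) : pred F := [pred a | a ^+ q == a].

Definition inj_on_coset (F : finFieldType) (q : nat) (p : {poly F}) (u : F) : Prop :=
  forall a b : F, a \in subFq q -> b \in subFq q -> p.[u + a] = p.[u + b] -> a = b.

(* ord_2(n) <= ord_2(m), with the convention ord_2(0) = infinity. *)
Definition ord2_le (n m : nat) : Prop :=
  (m = 0)%N \/ (n <> 0%N /\ (logn 2 n <= logn 2 m)%N).

From HB Require Import structures.
From mathcomp Require Import all_boot all_order all_algebra all_field.
From mathcomp Require Import all_fingroup all_solvable.
From mathcomp Require Import ring zify.
Set Implicit Arguments. Unset Strict Implicit. Unset Printing Implicit Defensive.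
Import GRing.Theory.

(* Let T(y) = y^(q^2) + y^q + y be the trace of F_(q^3) over F_q, so that
   f = T(X^(Q+1)).  As T is F_q-semilinear and the 2-power Frobenius is
   additive, for a in F_q one has f(u + a) + T(u)^(Q+1) = f(u) + (a + T(u))^(Q+1),
   and T(u) lies in F_q.  Hence f is injective on u + F_q iff x |-> x^(Q+1) is
   injective on F_q, i.e. iff gcd(q - 1, Q + 1) = 1: a common prime factor p
   yields (Cauchy) a nontrivial p-th root of unity in F_q.  Finally, since
   2^l + 1 and 2^l - 1 are coprime, gcd(2^k - 1, 2^l + 1) = 1 iff
   gcd(2^k - 1, 2^(2l) - 1) = gcd(2^k - 1, 2^l - 1), i.e. iff
   gcd(k, 2l) = gcd(k, l), which compares the 2-adic valuations of k and l. *)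

Lemma gcdn_expn_subn1 m a b : 0 < m ->
  gcdn (m ^ a - 1) (m ^ b - 1) = m ^ gcdn a b - 1.
Proof.
move=> m_gt0; have [n] := ubnP (a + b); elim: n a b => // n IHn a b ab_lt.
wlog le_ba : a b ab_lt / b <= a.
  move=> W; have [/W|/ltnW/W] := leqP b a; first exact.
  by rewrite gcdnC [gcdn a b]gcdnC; apply; rewrite addnC.
have [->|b_gt0] := posnP b; first by rewrite expn0 subnn !gcdn0.
have eq_a : a = (a - b) + b by rewrite subnK.
have splitE : m ^ a - 1 = m ^ (a - b) * (m ^ b - 1) + (m ^ (a - b) - 1).
  rewrite {1}eq_a expnD.
  have := expn_gt0 m (a - b); have := expn_gt0 m b; rewrite m_gt0 /=.
  set X := m ^ (a - b); set Y := m ^ b; nia.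
rewrite splitE gcdnC gcdnMDl IHn; last by lia.
by congr (_ ^ _ - 1); rewrite {2}eq_a [RHS]gcdnC gcdnDr.
Qed.

Lemma gcdnM2r_eq k l : 0 < k -> 0 < l ->
  (gcdn k (l * 2) == gcdn k l) = (logn 2 k <= logn 2 l).
Proof.
move=> k_gt0 l_gt0; have l2_gt0 : 0 < l * 2 by rewrite muln_gt0 l_gt0.
have lognM2 p : logn p (l * 2) = logn p l + (p == 2).
  by rewrite lognM // (logn_prime _ (isT : prime 2)).
apply/eqP/idP => [eq_gcd | le_kl].
  have := congr1 (logn 2) eq_gcd.
  by rewrite !logn_gcd // lognM2 eqxx; lia.
apply: eqn_from_log; rewrite ?gcdn_gt0 ?k_gt0 // => p.
by rewrite !logn_gcd // lognM2; case: eqP => [->|_]; lia.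
Qed.

Lemma coprime_gcdMr_eq a b c : coprime b c ->
  coprime a b = (gcdn a (b * c) == gcdn a c).
Proof.
move=> co_bc; apply/idP/eqP => [co_ab | eq_gcd]; first exact: Gauss_gcdr.
rewrite /coprime -dvdn1 -(eqP co_bc) dvdn_gcd dvdn_gcdr /=.
apply: dvdn_trans (dvdn_gcdr a c); rewrite -eq_gcd dvdn_gcd dvdn_gcdl.
exact/dvdn_mulr/dvdn_gcdr.
Qed.

Lemma odd_exp2_subn1 k : 0 < k -> odd (2 ^ k - 1).
Proof. by case: k => // k _; rewrite oddB ?expn_gt0 // oddX. Qed.

Lemma coprime_exp2_ord2 k l : 0 < k ->
  coprime (2 ^ k - 1) (2 ^ l + 1) <-> ord2_le k l.
Proof.
move=> k_gt0; case: l => [|l].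
  by split=> [_|_]; [left | rewrite coprimen2 odd_exp2_subn1].
have pos2 n : 1 <= 2 ^ n by rewrite expn_gt0.
have mulE : (2 ^ l.+1 + 1) * (2 ^ l.+1 - 1) = 2 ^ (l.+1 * 2) - 1.
  by rewrite mulnC expnM; have := pos2 l.+1; set X := 2 ^ l.+1; nia.
have co_pm : coprime (2 ^ l.+1 + 1) (2 ^ l.+1 - 1).
  have -> : 2 ^ l.+1 + 1 = 2 + (2 ^ l.+1 - 1) by have := pos2 l.+1; lia.
  by rewrite /coprime gcdnC gcdnDr -/(coprime _ 2) coprimen2 odd_exp2_subn1.
rewrite (coprime_gcdMr_eq _ co_pm) mulE !gcdn_expn_subn1 //.
rewrite eqn_sub2rE ?pos2 // eqn_exp2l // gcdnM2r_eq //.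
rewrite /ord2_le; split=> [le_kl | [//|[_ //]]].
by right; split=> //; lia.
Qed.

Local Open Scope ring_scope.

Lemma exprD_pchar_expn (R : comNzRingType) p : p \in [pchar R] ->
  forall j (x y : R), (x + y) ^+ (p ^ j) = x ^+ (p ^ j) + y ^+ (p ^ j).
Proof.
move=> pcharRp j x y; apply: exprDn_pchar.
by rewrite (eq_pnat _ (pcharf_eq pcharRp)) pnatX pnat_id ?(pcharf_prime pcharRp).
Qed.

Section RelativeTrace.

Variables (R : comNzRingType) (k : nat).
Hypothesis pcharR2 : 2%N \in [pchar R].
Local Notation q := (2 ^ k)%N.

Definition trace3 (y : R) := y ^+ (q ^ 2) + y ^+ q + y.

Lemma trace3D x y : trace3 (x + y) = trace3 x + trace3 y.
Proof. by rewrite /trace3 -expnM !(exprD_pchar_expn pcharR2); ring. Qed.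

Lemma trace3_scale c y : c ^+ q = c -> trace3 (c * y) = c * trace3 y.
Proof. by move=> cq; rewrite /trace3 !exprMn -mulnn exprM !cq !mulrDr. Qed.

Lemma trace3_fixed c : c ^+ q = c -> trace3 c = c.
Proof. by move=> cq; rewrite /trace3 -mulnn exprM !cq addrr_pchar2 ?add0r. Qed.

Lemma trace3_expr_pow2 l y : trace3 (y ^+ (2 ^ l)) = trace3 y ^+ (2 ^ l).
Proof.
by rewrite /trace3 !(exprD_pchar_expn pcharR2) -!exprM !(mulnC (2 ^ l)%N).
Qed.

Variable l : nat.
Local Notation Q := (2 ^ l)%N.

Lemma horner_f3 x : (f3 R q Q).[x] = trace3 (x ^+ Q.+1).
Proof. by rewrite /f3 horner_comp !hornerE. Qed.

Lemma horner_f3_shift u a : a ^+ q = a ->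
  (f3 R q Q).[u + a] + trace3 u ^+ Q.+1 = (f3 R q Q).[u] + (a + trace3 u) ^+ Q.+1.
Proof.
move=> aq; have aQq : (a ^+ Q) ^+ q = a ^+ Q by rewrite exprAC aq.
have aQ1q : (a ^+ Q.+1) ^+ q = a ^+ Q.+1 by rewrite exprAC aq.
have expandS (x y : R) :
    (x + y) ^+ Q.+1 = x ^+ Q.+1 + x ^+ Q * y + y ^+ Q * x + y ^+ Q.+1.
  by rewrite !exprSr (exprD_pchar_expn pcharR2) mulrDl !mulrDr addrA.
rewrite !horner_f3; set T := trace3 u.
rewrite (expandS u a) (expandS a T) !trace3D (trace3_fixed aQ1q).
rewrite [u ^+ Q * a]mulrC.
by rewrite !trace3_scale // trace3_expr_pow2 -/T; ring.
Qed.

End RelativeTrace.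

Lemma expr_eq1_coprime (R : nzRingType) (x : R) n m :
  coprime n m -> x ^+ n = 1 -> x ^+ m = 1 -> x = 1.
Proof.
have [->|n_gt0] := posnP n; first by rewrite /coprime gcd0n => /eqP-> _ /[!expr1].
move=> co_nm xn xm; have [c _ /dvdnP[d Bezout]] := Bezoutl m n_gt0.
move: Bezout; rewrite (eqP co_nm) => Bezout.
have : x ^+ (1 + c * m) = 1 by rewrite Bezout mulnC exprM xn expr1n.
by rewrite exprD mulnC exprM xm expr1n mulr1.
Qed.

Lemma finField_prime_root (F : finFieldType) p :
  prime p -> (p %| #|F|.-1)%N -> exists2 w : F, w ^+ p = 1 & w != 1.
Proof.
move=> p_pr; rewrite -card_finField_unit => /(Cauchy p_pr)[x _ ox].
exists (val x); first by rewrite -FinRing.val_unitX -ox expg_order.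
rewrite -FinRing.val_unit1 (inj_eq val_inj) -order_eq1 ox.
by rewrite neq_ltn prime_gt1 ?orbT.
Qed.

Section PowerMapOnSubfield.

Variables (F : finFieldType) (n m : nat).
Hypothesis m_gt0 : (0 < m)%N.

Lemma expr_inj_subFq :
  coprime n m -> {in subFq n.+1 &, injective (fun x : F => x ^+ m)}.
Proof.
move=> co_nm a b; rewrite !inE => /eqP a_fix /eqP b_fix /= eq_ab.
have [a_eq0|a_neq0] := eqVneq a 0.
  move: eq_ab; rewrite a_eq0 expr0n gtn_eqF // => /esym/eqP.
  by rewrite expf_eq0 m_gt0 => /eqP.
have b_neq0 : b != 0.
  by apply: contra_eq_neq eq_ab => ->; rewrite expr0n gtn_eqF ?expf_neq0.
have root1 (c : F) : c != 0 -> c ^+ n.+1 = c -> c ^+ n = 1.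
  by move=> c_neq0; rewrite exprSr => /(canRL (mulfK c_neq0)) ->; apply: divff.
apply/divr1_eq/(expr_eq1_coprime co_nm).
  by rewrite exprMn exprVn !root1 // invr1 mulr1.
by rewrite exprMn exprVn eq_ab divff // expf_neq0.
Qed.

Lemma expr_inj_subFqP : (n %| #|F|.-1)%N ->
  {in subFq n.+1 &, injective (fun x : F => x ^+ m)} <-> coprime n m.
Proof.
move=> dvd_n; split; last exact: expr_inj_subFq.
move=> inj_m; apply/negPn/negP => not_co.
have gcd_gt1 : (1 < gcdn n m)%N.
  by rewrite ltn_neqAle eq_sym not_co gcdn_gt0 m_gt0 orbT.
set p := pdiv (gcdn n m); have p_pr : prime p := pdiv_prime gcd_gt1.
have [p_n p_m] : (p %| n)%N /\ (p %| m)%N.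
  by split; apply: dvdn_trans (pdiv_dvd _) _; rewrite ?dvdn_gcdl ?dvdn_gcdr.
have [w wp w_neq1] := finField_prime_root p_pr (dvdn_trans p_n dvd_n).
have wX j : (p %| j)%N -> w ^+ j = 1.
  by case/dvdnP=> i ->; rewrite mulnC exprM wp expr1n.
by apply/(negP w_neq1)/eqP/inj_m; rewrite ?inE ?exprSr ?wX ?expr1n ?mul1r.
Qed.

End PowerMapOnSubfield.

Section CosetsOfSubfield.

Variables (F : finFieldType) (k l : nat).
Hypotheses (pcharF2 : 2%N \in [pchar F]) (cardF : #|F| = (2 ^ (3 * k))%N).
Local Notation q := (2 ^ k)%N.
Local Notation Q := (2 ^ l)%N.

Lemma subFqD (a b : F) :
  a \in subFq q -> b \in subFq q -> a + b \in subFq q.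
Proof. by rewrite !inE (exprD_pchar_expn pcharF2) => /eqP-> /eqP->. Qed.

Lemma trace3_subFq (u : F) : trace3 k u \in subFq q.
Proof.
have uq3 : u ^+ (q ^ 2 * q) = u.
  by rewrite -expnSr -expnM mulnC -cardF expf_card.
rewrite inE /trace3 !(exprD_pchar_expn pcharF2) -!exprM -mulnn uq3.
by rewrite [X in _ == X]addrC addrA.
Qed.

Lemma inj_on_coset_f3 (u : F) :
  inj_on_coset q (f3 F q Q) u <->
  {in subFq q &, injective (fun x : F => x ^+ Q.+1)}.
Proof.
have T_q := trace3_subFq u; set T := trace3 k u in T_q.
have shiftE a b : a \in subFq q -> b \in subFq q ->
    (f3 F q Q).[u + a] = (f3 F q Q).[u + b] <->
    (a + T) ^+ Q.+1 = (b + T) ^+ Q.+1.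
  rewrite !inE => /eqP a_q /eqP b_q; split=> [eq_ab | eq_ab].
    by apply: (addrI (f3 F q Q).[u]); rewrite -!horner_f3_shift // eq_ab.
  by apply: (addIr (T ^+ Q.+1)); rewrite !horner_f3_shift // eq_ab.
split=> [inj_u x y x_q y_q /= eq_xy | inj_Q a b a_q b_q eq_ab].
  have xT_q := subFqD x_q T_q; have yT_q := subFqD y_q T_q.
  apply: (addIr T); apply: inj_u => //; apply/shiftE => //.
  by rewrite !addrK_pchar2.
apply: (addIr T); apply: inj_Q (subFqD a_q T_q) (subFqD b_q T_q) _.
exact/(shiftE a b a_q b_q).
Qed.

End CosetsOfSubfield.

Theorem lemma3p2 (k l : nat) (F : finFieldType) :
  (0 < k)%N -> (2%N \in [pchar F]%R) -> #|F| = (2 ^ (3 * k))%N ->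
  ((forall u : F, inj_on_coset (2 ^ k) (f3 F (2 ^ k) (2 ^ l)) u)
     <-> coprime (2 ^ k - 1) (2 ^ l + 1))
  /\
  ((forall u : F, inj_on_coset (2 ^ k) (f3 F (2 ^ k) (2 ^ l)) u)
     <-> ord2_le k l).
Proof.
move=> k_gt0 pcharF2 cardF.
have q_gt0 : (0 < 2 ^ k)%N by rewrite expn_gt0.
have dvd_q : (2 ^ k - 1 %| #|F|.-1)%N.
  rewrite cardF mulnC expnM; apply/dvdnP; exists (2 ^ k * 2 ^ k + 2 ^ k + 1)%N.
  by move: q_gt0; set X := (2 ^ k)%N; nia.
have inj_coprime : (forall u : F, inj_on_coset (2 ^ k) (f3 F (2 ^ k) (2 ^ l)) u)
    <-> coprime (2 ^ k - 1) (2 ^ l + 1).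
  rewrite -(expr_inj_subFqP _ dvd_q) ?addn1 // subn1 prednK //.
  have coset_iff := inj_on_coset_f3 l pcharF2 cardF.
  by split=> [/(_ 0)/coset_iff | inj_Q u]; last exact/coset_iff.
split=> //; exact: iff_trans inj_coprime (coprime_exp2_ord2 l k_gt0).
Qed.
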